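(* If $d$ and $e$ are degree sequences with the same sum and $d\succeq e$, then $\Delta^*(d)\le\Delta^*(e)$.
   Context: Degree sequences (of finite simple graphs, terms may be $0$) are listed in nonincreasing order; sequences of different lengths are compared after padding with zeros. $m(d)=\max\{i : d_i\ge i-1\}$. For integers $k\ge 0$, $\Delta_k(d)=k(k-1)+\sum_{i>k}\min\{k,d_i\}-\sum_{i\le k}d_i$, and $\Delta^*(d)=\max\{\Delta_k(d):1\le k\le m(d)\}$. Majorization (dominance order): for degree sequences $d,e$ with the same sum, $d\succeq e$ means $\sum_{i\le k}d_i\ge\sum_{i\le k}e_i$ for all $k$. *)

From mathcomp Require Import all_boot all_order all_algebra.
Set Implicit Arguments. Unset Strict Implicit. Unset Printing Implicit Defensive.
Import Order.TTheory GRing.Theory Num.Theory.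

(* Sequences d : seq nat; d_i (1-indexed) is nth 0 d (i-1), so the sequence is
   implicitly padded with zeros. *)

Definition graphic (d : seq nat) : Prop :=
  exists adj : rel 'I_(size d),
    [/\ symmetric adj, irreflexive adj &
        forall i : 'I_(size d), #|[pred j | adj i j]| = nth 0 d i].

Definition degree_sequence (d : seq nat) : Prop :=
  sorted geq d /\ graphic d.

(* m(d) = max { i >= 1 : d_i >= i - 1 }  (1-indexed; with zero padding only
   indices i <= max(size d, 1) can qualify).  Index i (0-based) <-> i.+1. *)
Definition mdeg (d : seq nat) : nat :=
  \max_(0 <= i < maxn (size d) 1 | i <= nth 0 d i) i.+1.

Definition Delta (d : seq nat) (k : nat) : int :=
  ((k * (k - 1))%:Z + (\sum_(k <= i < size d) minn k (nth 0 d i))%:Z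
    - (\sum_(0 <= i < k) nth 0 d i)%:Z)%R.

(* Delta^*(d) = max { Delta_k(d) : 1 <= k <= m(d) }  (nonempty since m(d) >= 1). *)
Definition Delta_star (d : seq nat) : int :=
  \big[Num.max/Delta d 1]_(1 <= k < (mdeg d).+1) Delta d k.

Definition majorizes (d e : seq nat) : Prop :=
  sumn d = sumn e /\
  forall k, \sum_(0 <= i < k) nth 0 e i <= \sum_(0 <= i < k) nth 0 d i.

From mathcomp Require Import all_boot all_order all_algebra.
From mathcomp Require Import zify.
Import Order.TTheory GRing.Theory Num.Theory.
Set Implicit Arguments. Unset Strict Implicit. Unset Printing Implicit Defensive.

(* Write P_s(j) for the prefix sum s_1 + ... + s_j and
   T_s(k) = sum_{i>k} min(k, s_i), so that Delta_k(s) = k(k-1) + T_s(k) - P_s(k).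
   For every j >= k one has T_s(k) + P_s(j) <= k(j-k) + sum s, and for a
   nonincreasing s equality holds at the first j >= k with s_{j+1} < k.
   Hence, when d majorizes e and e is nonincreasing, T_d(k) <= T_e(k) while
   P_d(k) >= P_e(k), so Delta_k(d) <= Delta_k(e) for every k >= 1.
   This settles Delta_k(d) <= Delta^*(e) for k <= m(e).  For m(e) < k <= m(d)
   we compare with Delta_{m(e)}(e): the first k terms of d are all >= k-1,
   every term of e beyond position m(e) is < m(e), and an elementary
   quadratic inequality closes the gap. *)

Definition psum (s : seq nat) (k : nat) : nat := \sum_(0 <= i < k) nth 0 s i.
Definition tail_min (s : seq nat) (k : nat) : nat :=
  \sum_(k <= i < size s) minn k (nth 0 s i).

Lemma DeltaE s k :
  Delta s k = ((k * (k - 1))%:Z + (tail_min s k)%:Z - (psum s k)%:Z)%R.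
Proof. by []. Qed.

Lemma psum_split s i j : i <= j -> psum s j = psum s i + \sum_(i <= l < j) nth 0 s l.
Proof. by move=> hij; rewrite /psum (@big_cat_nat _ _ _ i). Qed.

Lemma psum_sumn s N : size s <= N -> psum s N = sumn s.
Proof.
move=> hN; rewrite (psum_split s hN) big1_seq ?addn0; last first.
  by move=> i /andP[_]; rewrite mem_index_iota => /andP[h _]; rewrite nth_default.
rewrite /psum big_mkord; elim: s {hN} => [|x s IH]; first by rewrite big_ord0.
by rewrite /= big_ord_recl /= IH.
Qed.

Lemma tail_min_ext s k N : size s <= N ->
  tail_min s k = \sum_(k <= i < N) minn k (nth 0 s i).
Proof.
move=> hN; have zero_from n : size s <= n ->
    \sum_(n <= i < N) minn k (nth 0 s i) = 0.
  move=> hn; rewrite big1_seq // => i /andP[_]; rewrite mem_index_iota.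
  by case/andP=> hi _; rewrite nth_default ?minn0 // (leq_trans hn).
rewrite /tail_min; case: (leqP k (size s)) => hk.
  by rewrite (@big_cat_nat _ _ _ (size s) k N) //= zero_from ?addn0.
by rewrite big_geq ?(ltnW hk) // zero_from // ltnW.
Qed.

(* Splitting T_s(k) + P_s(j) at j, with N a bound beyond the support of s:
   the terms k < i <= j contribute min(k, s_i) only, those beyond j contribute
   min(k, s_i) to T_s(k) and are missing from P_s(j). *)
Lemma tail_min_psum_split s k j (N := maxn (size s) j) : k <= j ->
  tail_min s k + psum s j + \sum_(j <= i < N) nth 0 s i =
  \sum_(k <= i < j) minn k (nth 0 s i) + \sum_(j <= i < N) minn k (nth 0 s i) + sumn s.
Proof.
move=> hkj; have hsN : size s <= N by rewrite leq_maxl.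
have hjN : j <= N by rewrite leq_maxr.
rewrite (tail_min_ext k hsN) -(psum_sumn hsN) (psum_split s hjN).
by rewrite (@big_cat_nat _ _ _ j k N) //=; lia.
Qed.

Lemma tail_min_psum_le s k j : k <= j -> tail_min s k + psum s j <= k * (j - k) + sumn s.
Proof.
move=> hkj; have := tail_min_psum_split s hkj.
have : \sum_(k <= i < j) minn k (nth 0 s i) <= k * (j - k).
  by rewrite mulnC -sum_nat_const_nat leq_sum // => i _; rewrite geq_minl.
have : \sum_(j <= i < maxn (size s) j) minn k (nth 0 s i)
       <= \sum_(j <= i < maxn (size s) j) nth 0 s i.
  by apply: leq_sum => i _; rewrite geq_minr.
lia.
Qed.

Lemma tail_min_psum_eq s k j : k <= j ->
  (forall i, k <= i -> i < j -> k <= nth 0 s i) ->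
  (forall i, j <= i -> nth 0 s i <= k) ->
  tail_min s k + psum s j = k * (j - k) + sumn s.
Proof.
move=> hkj big small; have := tail_min_psum_split s hkj.
have -> : \sum_(k <= i < j) minn k (nth 0 s i) = k * (j - k).
  rewrite mulnC -sum_nat_const_nat; apply: eq_big_nat => i /andP[hki hij].
  by apply/minn_idPl; apply: big.
have -> : \sum_(j <= i < maxn (size s) j) minn k (nth 0 s i)
          = \sum_(j <= i < maxn (size s) j) nth 0 s i.
  by apply: eq_big_nat => i /andP[hji _]; apply/minn_idPr; apply: small.
lia.
Qed.

Lemma sorted_nth s i j : sorted geq s -> i <= j -> nth 0 s j <= nth 0 s i.
Proof.
move=> hs hij; case: (ltnP j (size s)) => hj; last by rewrite nth_default.
apply: (@sorted_leq_nth _ geq) => //; last by rewrite inE (leq_ltn_trans hij).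
- by move=> y x z /= h1 h2; apply: leq_trans h2 h1.
- exact: leqnn.
Qed.

(* For a nonincreasing s and k >= 1 the bound of tail_min_psum_le is attained,
   at the first position j >= k where s drops below k. *)
Lemma tail_min_psum_attained s k : sorted geq s -> 0 < k ->
  exists2 j, k <= j & tail_min s k + psum s j = k * (j - k) + sumn s.
Proof.
move=> hs hk.
have exP : exists n, (k <= n) && (nth 0 s n < k).
  by exists (maxn k (size s)); rewrite leq_maxl nth_default // leq_maxr.
case: (ex_minnP exP) => j /andP[hkj hjk] hmin; exists j => //.
apply: tail_min_psum_eq => // [i hki hij|i hji].
  by rewrite leqNgt; apply/negP => hlt; have := hmin i; rewrite hki hlt leqNgt hij => /(_ isT).
by apply: ltnW; apply: leq_ltn_trans (sorted_nth hs hji) hjk.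
Qed.

(* m(s) >= 1, since the index 1 always qualifies. *)
Lemma mdeg_gt0 s : 0 < mdeg s.
Proof. by apply: (@bigmaxn_sup_seq _ _ 0); rewrite ?mem_index_iota /= ?leq_maxr. Qed.

Lemma nth_mdeg_lt s : nth 0 s (mdeg s) < mdeg s.
Proof.
case: (ltnP (mdeg s) (maxn (size s) 1)) => h.
  rewrite ltnNge; apply/negP => hP.
  have : (mdeg s).+1 <= mdeg s.
    by apply: (@leq_bigmax_seq _ _ (fun i => i <= nth 0 s i) (fun i => i.+1));
       rewrite // mem_index_iota /= h.
  by rewrite ltnn.
by rewrite nth_default ?mdeg_gt0 // (leq_trans (leq_maxl _ _) h).
Qed.

Lemma nth_ge_pred_mdeg s k l : sorted geq s -> k <= mdeg s -> l < k -> k - 1 <= nth 0 s l.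
Proof.
move=> hs hkm hlk.
have [i [hi hki]] : exists i, i <= nth 0 s i /\ k <= i.+1.
  (* Otherwise every admissible index i has i.+1 < k, so m(s) < k. *)
  case: (boolP [exists i : 'I_(maxn (size s) 1), (i <= nth 0 s i) && (k <= i.+1)]).
    by case/existsP => i /andP[h1 h2]; exists i.
  move/existsPn => hno; have : mdeg s <= k.-1.
    apply/bigmax_leqP_seq => i; rewrite mem_index_iota => /andP[_ hi] hP.
    by have := hno (Ordinal hi); rewrite /= hP /= -ltnNge; case: (k) hlk.
  lia.
have hli : l <= i by lia.
have := sorted_nth hs hli; lia.
Qed.

Lemma le_Delta_star s k : 0 < k -> k <= mdeg s -> (Delta s k <= Delta_star s)%R.
Proof.
by move=> h1 h2; apply: (@le_bigmax_seq _ _ _ _ _ k); rewrite // mem_index_iota h1 ltnS.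
Qed.

Lemma Delta_star_le s (B : int) :
  (forall k, 0 < k -> k <= mdeg s -> (Delta s k <= B)%R) -> (Delta_star s <= B)%R.
Proof.
move=> hB; rewrite /Delta_star big_seq; apply: bigmax_le; first exact/hB/mdeg_gt0.
by move=> k; rewrite mem_index_iota ltnS => /andP[h1 h2]; apply: hB.
Qed.

(* The quadratic estimate k(k-1) - M(M-1) = (k-M)(k+M-1) <= 2(k-M)(k-1) for
   M < k, used to compare Delta_k(d) with Delta_M(e). *)
Lemma quadratic_gap k M : M < k -> k * (k - 1) <= M * (M - 1) + 2 * ((k - M) * (k - 1)).
Proof.
move=> hMk; have [t ->] : exists t, k = M + t.+1 by exists (k - M).-1; lia.
have -> : M + t.+1 - 1 = M + t by lia.
have -> : M + t.+1 - M = t.+1 by lia.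
clear hMk; case: M => [|M]; first by nia.
have -> : M.+1 - 1 = M by lia.
nia.
Qed.

Section Majorization.
Variables d e : seq nat.
Hypothesis e_sorted : sorted geq e.
Hypothesis same_sum : sumn d = sumn e.
Hypothesis psum_dom : forall k, psum e k <= psum d k.

Lemma Delta_majorized k : 0 < k -> (Delta d k <= Delta e k)%R.
Proof.
move=> hk; rewrite !DeltaE.
have [j hkj he] := tail_min_psum_attained e_sorted hk.
have hd := tail_min_psum_le d hkj.
have := psum_dom j; have := psum_dom k.
move: he hd; generalize (k * (j - k)) => c; lia.
Qed.

Lemma Delta_beyond_mdeg k : sorted geq d -> mdeg e < k -> k <= mdeg d ->
  (Delta d k <= Delta e (mdeg e))%R.
Proof.
move=> d_sorted hMk hkd; set M := mdeg e; rewrite !DeltaE.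
have he : tail_min e M + psum e M = M * (M - M) + sumn e.
  apply: tail_min_psum_eq => // [i h1 h2|i hi]; first lia.
  exact/ltnW/(leq_ltn_trans (sorted_nth e_sorted hi) (nth_mdeg_lt e)).
have hd := tail_min_psum_le d (leqnn k).
have hPd : psum d M + (k - M) * (k - 1) <= psum d k.
  rewrite (psum_split d (ltnW hMk)) leq_add2l -(sum_nat_const_nat M k).
  rewrite big_nat_cond [X in _ <= X]big_nat_cond.
  by apply: leq_sum => l /andP[/andP[_ hl] _]; apply: nth_ge_pred_mdeg.
have := psum_dom M; have := @quadratic_gap k M hMk.
rewrite !subnn !muln0 in he hd.
move: hPd; generalize (k * (k - 1)) (M * (M - 1)) ((k - M) * (k - 1)) => a b c.
lia.
Qed.

End Majorization.

Theorem theorem17 (d e : seq nat) :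
  degree_sequence d -> degree_sequence e ->
  majorizes d e ->
  (Delta_star d <= Delta_star e)%R.
Proof.
move=> [d_sorted _] [e_sorted _] [same_sum psum_dom].
apply: Delta_star_le => k hk hkd.
case: (leqP k (mdeg e)) => hkM.
  apply: le_trans (le_Delta_star hk hkM).
  exact: Delta_majorized e_sorted same_sum psum_dom k hk.
apply: le_trans (le_Delta_star (mdeg_gt0 e) (leqnn _)).
exact: Delta_beyond_mdeg e_sorted same_sum psum_dom k d_sorted hkM hkd.
Qed.
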